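(* Let $p$ be an odd prime, let $l\ge 3$ be an odd integer with $l\mid p-1$, and let $\omega$ be a primitive $l$-th root of unity in $\mathbb{F}_p$. Then the cyclic code $\mathcal{C}_1$ of length $lp$ over $\mathbb{F}_p$ generated by $g_1(x)=(x-1)^4(x-\omega)(x-\omega^2)$ is an AMDS symbol-pair code with minimum symbol-pair distance $7$.
   Context: For $\mathbf{x}=(x_0,\dots,x_{n-1})\in\mathbb{F}_p^n$, the symbol-pair distance is $D_p(\mathbf{x},\mathbf{y})=|\{i:(x_i,x_{i+1})\neq(y_i,y_{i+1})\}|$ (indices modulo $n$); the minimum symbol-pair distance $d_p$ is the minimum of $D_p$ over distinct codewords. A code $\mathcal{C}$ of length $n$ with minimum symbol-pair distance $d_p$ is an AMDS (almost MDS) symbol-pair code if $|\mathcal{C}|=p^{n-d_p+1}$. The cyclic code generated by $g(x)\mid x^n-1$ is the ideal $\langle g(x)\rangle$ in $\mathbb{F}_p[x]/\langle x^n-1\rangle$. *)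

From mathcomp Require Import all_boot all_algebra.
From mathcomp Require Import boolp.
Set Implicit Arguments. Unset Strict Implicit. Unset Printing Implicit Defensive.
Import GRing.Theory.
Local Open Scope ring_scope.

Definition vec_poly (F : fieldType) (n : nat) (c : 'rV[F]_n) : {poly F} :=
  \sum_(i < n) c ord0 i *: 'X^i.

(* Cyclic code generated by g: the ideal <g(x)> of F[x]/<x^n - 1>,
   i.e. the vectors whose polynomial is (f * g) mod (x^n - 1) for some f. *)
Definition cyclic_code (F : finFieldType) (n : nat) (g : {poly F})
  : {set 'rV[F]_n} :=
  [set c | `[< exists f : {poly F}, vec_poly c = (f * g) %% ('X^n - 1) >]].

Definition pair_dist (F : finType) (n : nat) (x y : 'rV[F]_n) : nat :=
  #|[set i : 'I_n | (x ord0 i != y ord0 i) || (x ord0 (ordS i) != y ord0 (ordS i))]|.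

Definition min_pair_dist (F : finType) (n : nat) (C : {set 'rV[F]_n}) (d : nat)
  : Prop :=
  (exists x y, [/\ x \in C, y \in C, x != y & pair_dist x y = d]) /\
  (forall x y, x \in C -> y \in C -> x != y -> (d <= pair_dist x y)%N).

Definition AMDS_pair_code (F : finFieldType) (n : nat) (C : {set 'rV[F]_n})
  (d : nat) : Prop :=
  min_pair_dist C d /\ #|C| = (#|F| ^ (n - d + 1))%N.

From mathcomp Require Import all_boot all_algebra zify ring.
From mathcomp Require Import boolp.
Set Implicit Arguments. Unset Strict Implicit. Unset Printing Implicit Defensive.
Import GRing.Theory.

(* A word c of length n = lp lies in C_1 iff (x - 1)^4, x - omega and
   x - omega^2 divide c(x), i.e. iff sum_i c_i h(i mod p) = 0 for deg h <= 3
   (iterate x d/dx) and sum_i c_i h(omega^i) = 0 for deg h <= 2.  Testing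
   against a polynomial vanishing on all other values shows that when the
   support S has at most 4 (resp. 3) elements, each fiber of i |-> i mod p
   (resp. i |-> omega^i) meeting S meets it at least twice.  Since i is
   determined by (i mod p, omega^i), this excludes |S| <= 3, and, with one more
   computation with the moments, a support of size 4 containing two pairs of
   consecutive positions.  The pair weight of S is 2|S| - |S /\ (S - 1)|; the
   only remaining way for it to be below 7 is a run of 5 consecutive
   positions, impossible because a cyclic shift would turn c into a nonzero
   multiple of g of degree < 6.  The word (x^p - 1)(x^(p-1) - 1) has pair
   weight exactly 7, and |C_1| = p^(n-6) because g is monic of degree 6 and
   divides x^n - 1. *)

(** * Counting, runs and pair supports in Z/nZ *)

Lemma card_imset_le_half (T T' : finType) (f : T -> T') (A : {set T}) :
  (forall x, x \in A -> exists2 y, y \in A & (y != x) && (f y == f x)) ->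
  2 * #|f @: A| <= #|A|.
Proof.
move=> fibers; rewrite -[X in _ <= X]sum1_card (partition_big_imset f) /=.
rewrite mulnC -sum_nat_const.
apply: leq_sum => _ /imsetP [x xA ->].
have [y yA /andP [yx fyx]] := fibers x xA.
rewrite (bigD1 x) /=; last by rewrite xA eqxx.
by rewrite (bigD1 y) /= ?addnA ?leq_addr // yA fyx yx.
Qed.

Lemma card_le2_mem (T : finType) (A : {set T}) u v w : #|A| <= 2 ->
  u \in A -> v \in A -> u != v -> w \in A -> (w == u) || (w == v).
Proof.
move=> A2 uA vA uv wA; apply: contraTT A2 => /norP [wu wv]; rewrite -ltnNge.
apply/card_geqP; exists [:: u; v; w]; split => //.
  by rewrite /= !inE negb_or uv !(eq_sym _ w) wu wv.
by apply/allP; rewrite /= uA vA wA.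
Qed.

Section OrdinalShift.
Variable n : nat.

Lemma iter_ordS_val k (x : 'I_n) : iter k (@ordS n) x = (x + k) %% n :> nat.
Proof.
have n_gt0 : (0 < n) by case: n x => [[]|].
elim: k => [|k IHk]; first by rewrite addn0 modn_small.
by rewrite iterS /= IHk addnS -addn1 modnDml addn1.
Qed.

Lemma iter_ordS_mul_n k (x : 'I_n) : iter (k * n) (@ordS n) x = x.
Proof. by apply: val_inj; rewrite /= iter_ordS_val addnC modnMDl modn_small. Qed.

Lemma iter_ordS_inj k : injective (iter k (@ordS n)).
Proof. by elim: k => [|k IHk] //=; apply: inj_comp IHk; exact: ordS_inj. Qed.

Lemma ordS_closed_setT (S : {set 'I_n}) x0 :
  x0 \in S -> (forall x, x \in S -> ordS x \in S) -> S = setT.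
Proof.
move=> x0S closedS; apply/setP => y; rewrite inE.
have iterS_in k : iter k (@ordS n) x0 \in S by elim: k => //= k; apply: closedS.
have -> : y = iter (n - x0 + y) (@ordS n) x0; last exact: iterS_in.
apply: val_inj; rewrite /= iter_ordS_val addnA subnKC; last exact: ltnW.
by rewrite modnDl modn_small.
Qed.

Lemma eq_iter_ordS (x : 'I_n) k1 k2 : k1 < n -> k2 < n ->
  iter k1 (@ordS n) x = iter k2 (@ordS n) x -> k1 = k2.
Proof.
move=> k1n k2n /(congr1 (@nat_of_ord n)) /eqP.
by rewrite !iter_ordS_val eqn_modDl !modn_small // => /eqP.
Qed.

Definition window (s : 'I_n) w : {set 'I_n} := [set iter k (@ordS n) s | k : 'I_w].

Lemma run_reaches_end (S : {set 'I_n}) e x : #|S| < n ->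
  (forall y, y \in S -> y != e -> ordS y \in S) ->
  x \in S -> exists2 k, k < #|S| & iter k (@ordS n) x = e.
Proof.
move=> Sn closedS xS.
have [k /eqP xk | none] := pickP (fun k : 'I_#|S| => iter k (@ordS n) x == e).
  by exists k.
have iter_in k : k <= #|S| -> iter k (@ordS n) x \in S.
  elim: k => [|k IHk] kS //=; apply: closedS; first exact/IHk/ltnW.
  by have := none (Ordinal kS); rewrite /= => /negbT.
pose f (k : 'I_#|S|.+1) := iter k (@ordS n) x.
have f_inj : injective f.
  move=> k1 k2 /eq_iter_ordS k12; apply/val_inj/k12; exact: leq_trans Sn.
have : [set f k | k in [set: 'I_#|S|.+1]] \subset S.
  by apply/subsetP => _ /imsetP [k _ ->]; apply: iter_in; rewrite -ltnS.
by move/subset_leq_card; rewrite card_imset // cardsT card_ord ltnn.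
Qed.

Lemma run_sub_window (S : {set 'I_n}) e : #|S| < n ->
  (forall x, x \in S -> x != e -> ordS x \in S) ->
  S \subset window (iter (n - #|S|.-1) (@ordS n) e) #|S|.
Proof.
move=> Sn closedS; apply/subsetP => x xS.
have [k kS xk] := run_reaches_end Sn closedS xS.
have kS' : #|S|.-1 - k < #|S| by lia.
apply/imsetP; exists (Ordinal kS') => //=; rewrite -xk -!iterD.
(* lia must see the copies of #|S| as one atom *)
by rewrite (_ : _ + _ + _ = 1 * n) ?iter_ordS_mul_n //; set m := #|S| in Sn kS *; lia.
Qed.

Lemma card_ord_val_in (s : seq nat) : uniq s -> all (fun k => k < n) s ->
  #|[set i : 'I_n | val i \in s]| = size s.
Proof.
move=> s_uniq /allP s_lt.
rewrite cardE -(size_map val); apply/perm_size/uniq_perm => //.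
  by rewrite map_inj_uniq ?enum_uniq //; exact: val_inj.
move=> k; apply/mapP/idP => [[i] | ks]; first by rewrite mem_enum inE => ? ->.
by exists (Ordinal (s_lt k ks)); rewrite ?mem_enum ?inE.
Qed.

Definition pair_support (S : {set 'I_n}) : {set 'I_n} := S :|: @ordS n @^-1: S.

Lemma card_pair_support S :
  #|pair_support S| = #|S| + #|S| - #|S :&: @ordS n @^-1: S|.
Proof. by rewrite -{2}(card_preimset S (@ordS_inj n)) -cardsUI addnK. Qed.

Lemma small_pair_support (S : {set 'I_n}) :
  7 <= n -> S != set0 -> #|pair_support S| <= 6 ->
  [\/ #|S| <= 3,
      #|S| = 4 /\ 1 < #|S :&: @ordS n @^-1: S| |
      exists s, S \subset window s 5].
Proof.
move=> n7 /set0Pn [x0 x0S]; rewrite card_pair_support.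
set A := S :&: _ => small.
have [e eS eNS] : exists2 e, e \in S & ordS e \notin S.
  apply/exists_inP; rewrite -negb_forall_in; apply/negP => /forall_inP closedS.
  move: small; rewrite /A (ordS_closed_setT x0S closedS) preimsetT setIT cardsT card_ord.
  lia.
have AS : A \subset S :\ e.
  apply/subsetP => x; rewrite !inE => /andP [xS xNS]; rewrite xS andbT.
  by apply: contraNneq eNS => <-.
have cardS : #|S| = #|S :\ e|.+1 by rewrite (cardsD1 e S) eS.
have cardA := subset_leq_card AS.
have [S3 | S4] := leqP #|S| 3; first by constructor 1.
have [S4e | S4ne] := eqVneq #|S| 4; first by constructor 2; split; lia.
have A_eq : A = S :\ e by apply/eqP; rewrite eqEcard AS; lia.
constructor 3; exists (iter (n - #|S|.-1) (@ordS n) e).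
have S5 : #|S| = 5 by lia.
rewrite -[5]S5; apply: run_sub_window; first lia.
move=> y yS ye; have : y \in A by rewrite A_eq !inE ye yS.
by rewrite !inE => /andP [].
Qed.

End OrdinalShift.

Local Open Scope ring_scope.

(** * Moments of a polynomial *)

Lemma sum_supported (T : finType) (V : nmodType) (s : seq T) (f : T -> V) :
  uniq s -> (forall i, i \notin s -> f i = 0) -> \sum_i f i = \sum_(i <- s) f i.
Proof.
move=> s_uniq f0; rewrite [RHS]big_uniq // (bigID (fun i => i \in s)) /=.
by rewrite [X in _ + X]big1 ?addr0.
Qed.

Section Moments.
Variable F : fieldType.

Lemma horner_moments_eq0 (I : finType) (c z : I -> F) t :
  (forall k, (k < t)%N -> \sum_i c i * z i ^+ k = 0) ->
  forall h : {poly F}, (size h <= t)%N -> \sum_i c i * h.[z i] = 0.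
Proof.
move=> mom h sh.
under eq_bigr => i _ do rewrite (horner_coef_wide _ sh) mulr_sumr.
rewrite exchange_big big1 // => k _.
transitivity (h`_k * \sum_i c i * z i ^+ k); last by rewrite mom ?mulr0.
by rewrite mulr_sumr; apply: eq_bigr => i _; rewrite mulrCA.
Qed.

Definition euler_deriv (q : {poly F}) : {poly F} := 'X * q^`().

Lemma coef_iter_euler_deriv k q i :
  (iter k euler_deriv q)`_i = q`_i * i%:R ^+ k.
Proof.
elim: k i => [|k IHk] i; first by rewrite mulr1.
rewrite iterS coefXM; case: i => [|i]; first by rewrite mulr0n expr0n mulr0.
by rewrite /= coef_deriv IHk exprSr mulrA mulr_natr.
Qed.

Lemma dvdp_euler_deriv a m q :
  ('X - a%:P) ^+ m.+1 %| q -> ('X - a%:P) ^+ m %| euler_deriv q.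
Proof.
case/dvdpP=> r ->; rewrite dvdp_mull // derivM deriv_exp derivXsubC mul1r.
apply: dvdp_add; first by rewrite exprS mulrA dvdp_mull // dvdp_mulIr.
by rewrite -mulr_natl !dvdp_mull.
Qed.

Lemma moments_eq0_of_dvdp m (q : {poly F}) N k : ('X - 1) ^+ m %| q -> (size q <= N)%N ->
  (k < m)%N -> \sum_(i < N) q`_i * i%:R ^+ k = 0.
Proof.
move=> qm qN km.
have size_iter : (size (iter k euler_deriv q) <= N)%N.
  apply/leq_sizeP => j jN; rewrite coef_iter_euler_deriv.
  by move/leq_sizeP: qN => ->; rewrite ?mul0r.
have dvd_iter : forall j, (j <= m)%N -> ('X - 1) ^+ (m - j) %| iter j euler_deriv q.
  elim=> [|j IHj] jm; first by rewrite subn0.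
  rewrite iterS -polyC1; apply: dvdp_euler_deriv.
  by rewrite polyC1 subnSK // IHj // ltnW.
have /rootP : root (iter k euler_deriv q) 1.
  rewrite -dvdp_XsubCl polyC1 (dvdp_trans _ (dvd_iter k (ltnW km))) //.
  by rewrite -{1}(expr1 ('X - 1)) dvdp_exp2l // subn_gt0.
rewrite (horner_coef_wide _ size_iter) => root1; rewrite -[RHS]root1.
by apply: eq_bigr => i _; rewrite coef_iter_euler_deriv expr1n mulr1.
Qed.

End Moments.

Section FiberSums.
Variables (F : finFieldType) (I : finType) (c z : I -> F) (t : nat).
Hypothesis moments : forall h : {poly F}, (size h <= t)%N -> \sum_i c i * h.[z i] = 0.
Hypothesis support_small : (#|[set i | c i != 0%R]| <= t)%N.

(* Test against the product of the X - z i over the other values of z. *)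
Lemma fiber_sum_eq0 w : \sum_(i | z i == w) c i = 0.
Proof.
set Z := [set z i | i in [set i | c i != 0]].
have zZ i : c i != 0 -> z i \in Z by move=> ci; apply/imsetP; exists i; rewrite ?inE.
have [wZ | wNZ] := boolP (w \in Z); last first.
  rewrite big1 // => i /eqP ziw; apply/eqP/negPn/negP => /zZ.
  by rewrite ziw (negPf wNZ).
pose h := \prod_(u in Z :\ w) ('X - u%:P).
have hw : h.[w] != 0.
  rewrite horner_prod; apply/prodf_neq0 => u; rewrite !inE => /andP [uw _].
  by rewrite hornerXsubC subr_eq0 eq_sym.
have sh : (size h <= t)%N.
  rewrite /h -big_enum size_prod_XsubC -cardE.
  have := leq_trans (leq_imset_card z _) support_small.
  by rewrite -/Z (cardsD1 w Z) wZ.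
have := moments sh; rewrite (bigID (fun i => z i == w)) /= [X in _ + X]big1.
  rewrite addr0 (eq_bigr (fun i => c i * h.[w])); last by move=> i /eqP ->.
  by rewrite -mulr_suml => /eqP; rewrite mulf_eq0 (negPf hw) orbF => /eqP.
move=> i ziw; have [-> | ci] := eqVneq (c i) 0; first by rewrite mul0r.
rewrite horner_prod (bigD1 (z i)) ?inE ?ziw ?zZ //=.
by rewrite hornerXsubC subrr mul0r mulr0.
Qed.

Lemma fiber_partner i : c i != 0 -> exists j, [/\ j != i, c j != 0 & z j = z i].
Proof.
move=> ci; have := fiber_sum_eq0 (z i); rewrite (bigD1 i) //=.
have [j /and3P [ji cj /eqP zj] | none] :=
  pickP (fun j => [&& j != i, c j != 0 & z j == z i]).
  by exists j.
rewrite big1 ?addr0 => [/eqP|j /andP [/eqP zj ji]]; first by rewrite (negPf ci).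
by apply/eqP/negPn/negP => cj; have := none j; rewrite ji cj zj eqxx.
Qed.

Lemma card_fibers_le_half :
  (2 * #|z @: [set i | c i != 0%R]| <= #|[set i | c i != 0%R]|)%N.
Proof.
apply: card_imset_le_half => i; rewrite inE => ci.
by have [j [ji cj zj]] := fiber_partner ci; exists j; rewrite ?inE // ji zj eqxx.
Qed.

End FiberSums.

(** * Cyclic codes *)

Lemma size_rVpoly (R : nzSemiRingType) m (v : 'rV[R]_m) : (size (rVpoly v) <= m)%N.
Proof. exact: size_poly. Qed.

Lemma horner_rVpoly (R : comNzRingType) m (c : 'rV[R]_m) x :
  (rVpoly c).[x] = \sum_(i < m) c 0 i * x ^+ i.
Proof.
rewrite (horner_coef_wide _ (size_rVpoly c)).
by apply: eq_bigr => i _; rewrite coef_rVpoly_ord.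
Qed.

Lemma vec_polyE (F : fieldType) m (c : 'rV[F]_m) : vec_poly c = rVpoly c.
Proof.
apply/polyP => k; rewrite coef_rVpoly /vec_poly coef_sumMXn.
case: insubP => [i _ <- | km]; first by rewrite big_pred1_eq.
by rewrite big1 // => i /eqP ik; move: km; rewrite -ik ltn_ord.
Qed.

Lemma dvdp_XnsubX_modn (R : idomainType) n m :
  ('X^n - 1 : {poly R}) %| 'X^m - 'X^(m %% n)%N.
Proof.
rewrite {1}(divn_eq m n) exprD mulnC exprM -{2}['X^(m %% n)%N]mul1r -mulrBl.
by apply: dvdp_mulr; rewrite [X in _ %| X]subrX1 dvdp_mulr.
Qed.

Definition row_supp (R : nmodType) n (c : 'rV[R]_n) : {set 'I_n} :=
  [set i | c 0 i != 0].

Lemma row_supp_eq0 (R : nmodType) n (c : 'rV[R]_n) : (row_supp c == set0) = (c == 0).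
Proof.
apply/eqP/eqP => [c0 | ->]; last by apply/setP => i; rewrite !inE mxE eqxx.
apply/rowP => i; rewrite mxE; apply/eqP/negPn/negP => ci.
have : i \in row_supp c by rewrite inE.
by rewrite c0 inE.
Qed.

Lemma pair_dist_supp (R : finZmodType) n (x y : 'rV[R]_n) :
  pair_dist x y = #|pair_support (row_supp (x - y))|.
Proof. by apply: eq_card => i; rewrite !inE !mxE !subr_eq0. Qed.

Definition cshift (R : Type) n t (c : 'rV[R]_n) : 'rV[R]_n :=
  \row_j c 0 (iter t (@ordS n) j).

Section CyclicCode.
Variables (F : finFieldType) (n : nat) (g : {poly F}).
Hypotheses (n_gt0 : (0 < n)%N) (g_dvd : g %| 'X^n - 1).
Local Notation C := (cyclic_code n g).

Lemma mem_cyclic_code c : (c \in C) = (g %| rVpoly c).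
Proof.
rewrite inE vec_polyE; apply/asboolP/idP => [[f ->] | gc].
  by rewrite -(dvdp_mod _ g_dvd) dvdp_mull.
exists (rVpoly c %/ g); rewrite divpK // modp_small //.
by rewrite -polyC1 size_XnsubC // ltnS size_rVpoly.
Qed.

Lemma cyclic_code0 : 0 \in C.
Proof. by rewrite mem_cyclic_code linear0 dvdp0. Qed.

Lemma cyclic_codeB c d : c \in C -> d \in C -> c - d \in C.
Proof. by rewrite !mem_cyclic_code linearB; apply: dvdp_sub. Qed.

Lemma size_Xn_sub1 : size ('X^n - 1 : {poly F}) = n.+1.
Proof. by rewrite -polyC1 size_XnsubC. Qed.

Lemma generator_neq0 : g != 0.
Proof. by apply: contraTneq g_dvd => ->; rewrite dvd0p -size_poly_eq0 size_Xn_sub1. Qed.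

Lemma size_generator : (size g <= n.+1)%N.
Proof. by rewrite -size_Xn_sub1 dvdp_leq // -size_poly_gt0 size_Xn_sub1. Qed.

(* Multiplication by X^(t (n - 1)) shifts back by t modulo X^n - 1. *)
Lemma cshift_cyclic_code t c : c \in C -> cshift t c \in C.
Proof.
rewrite !mem_cyclic_code => gc.
set m := (t * n.-1)%N.
have Xn_dvd : 'X^n - 1 %| 'X^m * rVpoly c - rVpoly (cshift t c).
  rewrite -!vec_polyE /vec_poly (reindex_inj (@iter_ordS_inj n t)) mulr_sumr -sumrB.
  apply: (big_ind (fun q => _ %| q)) => [|u v|j _]; [exact: dvdp0 | exact: dvdp_add |].
  rewrite mxE -scalerAr -exprD -scalerBr -mul_polyC dvdp_mull //.
  have -> : j = ((m + iter t (@ordS n) j) %% n)%N :> nat.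
    by rewrite iter_ordS_val modnDmr addnCA -mulnSr prednK // addnC modnMDl modn_small.
  exact: dvdp_XnsubX_modn.
have := dvdp_sub (dvdp_mull 'X^m gc) (dvdp_trans g_dvd Xn_dvd).
by rewrite subKr.
Qed.

Lemma card_cyclic_code : g \is monic -> #|C| = (#|F| ^ (n - (size g).-1))%N.
Proof.
move=> g_monic; set k := (n - (size g).-1)%N.
have g_size := size_generator.
have g_gt0 : (0 < size g)%N by rewrite size_poly_gt0 monic_neq0.
have size_mulg (v : 'rV[F]_k) : (size (rVpoly v * g)%R <= n)%N.
  have [-> | v0] := eqVneq (rVpoly v) 0; first by rewrite mul0r size_poly0.
  by rewrite size_Mmonic //; have := size_rVpoly v; lia.
have encode_inj : injective (fun v : 'rV[F]_k => poly_rV (rVpoly v * g) : 'rV[F]_n).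
  move=> v w /(congr1 rVpoly); rewrite !poly_rV_K ?size_mulg //.
  by move/(mulIf (monic_neq0 g_monic))/(can_inj rVpolyK).
have -> : C = [set poly_rV (rVpoly v * g) | v in [set: 'rV[F]_k]].
  apply/setP => c; rewrite mem_cyclic_code; apply/idP/imsetP => [gc | [v _ ->]].
    set q := rVpoly c %/ g; have cq : rVpoly c = q * g by rewrite divpK.
    have q_size : (size q <= k)%N.
      have [-> | q0] := eqVneq q 0; first by rewrite size_poly0.
      have := size_rVpoly c; rewrite cq size_Mmonic // /k.
      (* lia must see the copies of size g, resp. size q, as one atom *)
      by set sg := size g in g_gt0 *; set sq := size q; lia.
    by exists (poly_rV q); rewrite ?inE // poly_rV_K // -cq rVpolyK.
  by rewrite poly_rV_K ?size_mulg // dvdp_mull.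
by rewrite card_imset // cardsT card_mx mul1n.
Qed.

(* Shifting the window to the front leaves a multiple of g of degree < deg g. *)
Lemma cyclic_code_window_eq0 {c s w} : (w <= (size g).-1)%N ->
  c \in C -> row_supp c \subset window s w -> c = 0.
Proof.
move=> wg cC /subsetP supp_c; set c' := cshift s c.
have c'_low : (size (rVpoly c') <= (size g).-1)%N.
  apply/leq_sizeP => j gj; rewrite coef_rVpoly; case: insubP => // i _ ij.
  apply/eqP/negPn/negP => c'i.
  have /supp_c/imsetP [k _] : iter s (@ordS n) i \in row_supp c.
    by move: c'i; rewrite inE mxE.
  have -> : iter s (@ordS n) i = iter i (@ordS n) s.
    by apply: val_inj; rewrite /= !iter_ordS_val addnC.
  have kn : (k < n)%N by have := ltn_ord k; have := size_generator; lia.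
  move=> /eq_iter_ordS ik; have {}ik := ik (ltn_ord i) kn.
  by move: gj; rewrite -ij /= ik leqNgt (leq_trans (ltn_ord k)).
have c'0 : c' = 0.
  apply: (can_inj rVpolyK); rewrite linear0; apply/eqP.
  have gc' : g %| rVpoly c' by rewrite -mem_cyclic_code cshift_cyclic_code.
  apply: contraTT c'_low => c'0; rewrite -ltnNge prednK ?size_poly_gt0 ?generator_neq0 //.
  exact: dvdp_leq c'0 gc'.
apply/rowP => i; rewrite mxE -[i](@iter_ordS_mul_n n s).
rewrite (_ : s * n = s + s * n.-1)%N; last by rewrite -mulnS prednK.
rewrite iterD; move/rowP: c'0 => /(_ (iter (s * n.-1) (@ordS n) i)).
by rewrite !mxE.
Qed.

End CyclicCode.

(** * The code C_1 *)

Section Theorem3p11.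
Variables (p l : nat) (omega : 'F_p).
Hypotheses (p_prime : prime p) (p_odd : odd p) (l_odd : odd l) (l_ge3 : (3 <= l)%N)
  (l_dvd : (l %| p.-1)%N) (omega_prim : l.-primitive_root omega).

Local Notation n := (l * p)%N.
Local Notation g :=
  (('X - 1) ^+ 4 * ('X - omega%:P) * ('X - (omega ^+ 2)%:P) : {poly 'F_p}).
Local Notation C := (cyclic_code n g).

Lemma l_lt_p : (l < p)%N.
Proof.
have p_gt1 := prime_gt1 p_prime.
by have := dvdn_leq _ l_dvd; rewrite -subn1 subn_gt0 => /(_ p_gt1); lia.
Qed.

Lemma p_ge5 : (5 <= p)%N.
Proof.
have : (4 <= p)%N by have := l_lt_p; lia.
by rewrite leq_eqVlt => /orP [/eqP p4 | //]; move: p_odd; rewrite -p4.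
Qed.

Lemma n_ge15 : (15 <= n)%N.
Proof. exact: leq_mul l_ge3 p_ge5. Qed.

Lemma n_gt0 : (0 < n)%N.
Proof. exact: leq_trans n_ge15. Qed.

Lemma coprime_l_p : coprime l p.
Proof. by rewrite coprime_sym prime_coprime // gtnNdvd // ?l_lt_p; lia. Qed.

Lemma omega_neq : [/\ omega != 1, omega ^+ 2 != 1 & omega ^+ 2 != omega].
Proof.
have neq i j : (i < l)%N -> (j < l)%N -> i != j -> omega ^+ i != omega ^+ j.
  by move=> il jl; rewrite (eq_prim_root_expr omega_prim) !modn_small.
have := neq 1 0; have := neq 2 0; have := neq 2 1; rewrite expr0 expr1.
by move=> n21 n20 n10; split; [apply: n10 | apply: n20 | apply: n21]; lia.
Qed.

Lemma dvdp_gP q :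
  (g %| q) = [&& ('X - 1) ^+ 4 %| q, root q omega & root q (omega ^+ 2)].
Proof.
have [om1 om21 om2om] := omega_neq.
rewrite Gauss_dvdp; last by rewrite coprimep_XsubC rootM negb_or -polyC1
  root_exp_XsubC om21 root_XsubC om2om.
rewrite Gauss_dvdp; last by rewrite coprimep_XsubC -polyC1 root_exp_XsubC om1.
by rewrite !dvdp_XsubCl andbA.
Qed.

Lemma X_sub1_expp : ('X - 1) ^+ p = 'X^p - 1 :> {poly 'F_p}.
Proof.
have pchar_p : p \in [pchar {poly 'F_p}] by rewrite pchar_poly; exact: pchar_Fp.
rewrite -(Frobenius_autE pchar_p) Frobenius_autB_comm; last exact: commr1.
by rewrite !Frobenius_autE expr1n.
Qed.

Lemma dvdp_X_sub1_Xp : ('X - 1 : {poly 'F_p}) ^+ 4 %| 'X^p - 1.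
Proof. by rewrite -X_sub1_expp dvdp_exp2l // ltnW // p_ge5. Qed.

Lemma g_dvd_Xn_sub1 : g %| 'X^n - 1.
Proof.
rewrite dvdp_gP; apply/and3P; split.
- apply: dvdp_trans dvdp_X_sub1_Xp _.
  by rewrite mulnC exprM [X in _ %| X]subrX1 dvdp_mulr.
- by rewrite rootE !hornerE exprM (prim_expr_order omega_prim) expr1n subrr.
- by rewrite rootE !hornerE -exprM mulnCA exprM (prim_expr_order omega_prim) expr1n subrr.
Qed.

Lemma mem_C c : (c \in C) = (g %| rVpoly c).
Proof. exact: (mem_cyclic_code n_gt0 g_dvd_Xn_sub1 c). Qed.

Lemma g_monic : g \is monic.
Proof. by rewrite !monicMr ?monic_exp ?monicXsubC // -polyC1 monicXsubC. Qed.

Lemma size_g : size g = 7%N.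
Proof.
by rewrite -polyC1 !size_mul ?mulf_neq0 ?expf_neq0 ?polyXsubC_eq0 // !size_XsubC.
Qed.

Lemma card_C : #|C| = (#|'F_p| ^ (n - 7 + 1))%N.
Proof.
rewrite card_cyclic_code ?g_monic ?g_dvd_Xn_sub1 ?size_g //; last by have := n_ge15; lia.
by congr (_ ^ _)%N; have := n_ge15; lia.
Qed.

Lemma omega_exp_pred_p : omega ^+ p.-1 = 1.
Proof.
by case/dvdnP: l_dvd => k ->; rewrite mulnC exprM (prim_expr_order omega_prim) expr1n.
Qed.

Definition witness_poly : {poly 'F_p} := ('X^p - 1) * ('X^(p.-1) - 1).

Lemma coef_witness_poly_neq0 k :
  (witness_poly`_k != 0) = (k \in [:: 0; p.-1; p; p + p.-1])%N.
Proof.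
have := p_ge5; rewrite /witness_poly mulrBl mulrBr mul1r mulr1 -exprD.
rewrite !coefB !coefXn coef1 !inE.
case: (k == (p + p.-1)%N) / eqP => e1; case: (k == p) / eqP => e2;
  case: (k == p.-1) / eqP => e3; case: (k == 0)%N / eqP => e4; try lia.
all: by rewrite /= ?subr0 ?sub0r ?opprK ?oppr_eq0 ?oner_eq0.
Qed.

Lemma size_witness_poly : (size witness_poly <= n)%N.
Proof.
rewrite (leq_trans (size_mul_leq _ _)) // -polyC1 !size_XnsubC; last 2 first.
- by have := p_ge5; lia.
- by have := p_ge5; lia.
by have := leq_mul l_ge3 (leqnn p); have := p_ge5; lia.
Qed.

Definition witness : 'rV['F_p]_n := poly_rV witness_poly.

Lemma witness_in_C : witness \in C.
Proof.
rewrite mem_C poly_rV_K ?size_witness_poly // dvdp_gP /witness_poly; apply/and3P; split.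
- exact: dvdp_mulr dvdp_X_sub1_Xp.
- by rewrite rootM !rootE !hornerE omega_exp_pred_p subrr orbT.
- by rewrite rootM !rootE !hornerE (exprAC _ 2 p.-1) omega_exp_pred_p expr1n subrr orbT.
Qed.

Lemma witness_neq0 : witness != 0.
Proof.
apply/eqP => /rowP /(_ (Ordinal n_gt0)) /eqP; rewrite !mxE; apply/negP.
by rewrite coef_witness_poly_neq0.
Qed.

Lemma pair_dist_witness : pair_dist witness 0 = 7%N.
Proof.
have := p_ge5; have := leq_mul l_ge3 (leqnn p) => pn p5.
rewrite pair_dist_supp subr0 (_ : pair_support _ =
  [set i : 'I_n | val i \in [:: 0; p.-1; p; p + p.-1; p.-2; p + p.-2; n.-1]]%N).
  by rewrite card_ord_val_in //=; [rewrite !inE | ]; lia.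
apply/setP => -[i i_lt]; rewrite !inE !mxE !coef_witness_poly_neq0 /= !inE.
case: (ltnP i.+1 n) => [i1n | ni1]; first by rewrite modn_small //; lia.
by rewrite (_ : i.+1 = n) ?modnn //; lia.
Qed.

(* The coordinates of a position i under Z/lpZ = Z/pZ x Z/lZ. *)
Definition idx_p (i : 'I_n) : 'F_p := (i : nat)%:R.
Definition idx_l (i : 'I_n) : 'F_p := omega ^+ i.

Lemma natr_Fp_eq i j : (i%:R == j%:R :> 'F_p) = (i == j %[mod p]).
Proof.
wlog le_ij : i j / (i <= j)%N.
  by move=> W; case/orP: (leq_total i j) => /W //; rewrite eq_sym => ->; rewrite eq_sym.
rewrite [RHS]eq_sym eqn_mod_dvd // (dvdn_pcharf (pchar_Fp p_prime)) natrB //.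
by rewrite subr_eq0 eq_sym.
Qed.

Lemma idx_p_ordS i : idx_p (ordS i) = idx_p i + 1.
Proof.
rewrite /idx_p /= -(Fp_nat_mod p_prime (i.+1 %% n)) modn_dvdm ?dvdn_mull //.
by rewrite Fp_nat_mod // natr1.
Qed.

Lemma idx_l_ordS i : idx_l (ordS i) = idx_l i * omega.
Proof.
by rewrite /idx_l /= expr_mod ?exprSr // exprM (prim_expr_order omega_prim) expr1n.
Qed.

Lemma addr_natr_neq (b : 'F_p) k : (0 < k < p)%N -> b + k%:R != b.
Proof.
move=> /andP [k_gt0 k_lt]; rewrite -subr_eq0 addrAC subrr add0r.
by rewrite -(dvdn_pcharf (pchar_Fp p_prime)) gtnNdvd.
Qed.

Lemma Fp_add1_neq (b : 'F_p) : b + 1 != b.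
Proof. by have := @addr_natr_neq b 1; rewrite mulr1n; apply; rewrite /= prime_gt1. Qed.

Lemma Fp_add2_neq (b : 'F_p) : b + 1 + 1 != b.
Proof.
by have := @addr_natr_neq b 2; rewrite mulr2n addrA; apply; rewrite /= (leq_trans _ p_ge5).
Qed.

Lemma idx_inj (zeta : 'F_p) i j : l.-primitive_root zeta ->
  idx_p i = idx_p j -> zeta ^+ i = zeta ^+ j -> i = j.
Proof.
move=> zeta_prim /eqP; rewrite natr_Fp_eq => ij_p /eqP.
rewrite (eq_prim_root_expr zeta_prim) => ij_l; apply: val_inj => /=.
have : (i == j %[mod n]) by rewrite chinese_remainder ?coprime_l_p // ij_l ij_p.
by rewrite !modn_small // => /eqP.
Qed.

Section Codeword.
Variable c : 'rV['F_p]_n.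
Hypothesis cC : c \in C.
Local Notation S := (row_supp c).

Lemma codeword_dvdp :
  [&& ('X - 1) ^+ 4 %| rVpoly c, root (rVpoly c) omega & root (rVpoly c) (omega ^+ 2)].
Proof. by rewrite -dvdp_gP -mem_C. Qed.

Lemma sum_idx_p_horner (h : {poly 'F_p}) :
  (size h <= 4)%N -> \sum_i c 0 i * h.[idx_p i] = 0.
Proof.
apply: horner_moments_eq0 => k k4; have /and3P [dvd4 _ _] := codeword_dvdp.
rewrite -[RHS](moments_eq0_of_dvdp dvd4 (size_rVpoly c) k4).
by apply: eq_bigr => i _; rewrite coef_rVpoly_ord.
Qed.

Lemma sum_idx_l_exp k : (k < 3)%N -> \sum_i c 0 i * idx_l i ^+ k = 0.
Proof.
move=> k3; have /and3P [dvd4 /rootP root1 /rootP root2] := codeword_dvdp.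
have : (rVpoly c).[omega ^+ k] = 0.
  case: k k3 => [|[|[|]]] // _; rewrite ?expr1 //.
  apply/rootP; rewrite expr0 -dvdp_XsubCl polyC1 (dvdp_trans _ dvd4) //.
  by rewrite -{1}(expr1 ('X - 1)) dvdp_exp2l.
rewrite horner_rVpoly => root_k; rewrite -[RHS]root_k.
by apply: eq_bigr => i _; rewrite exprAC.
Qed.

Lemma sum_idx_l_horner (h : {poly 'F_p}) :
  (size h <= 3)%N -> \sum_i c 0 i * h.[idx_l i] = 0.
Proof. by apply: horner_moments_eq0 => k; apply: sum_idx_l_exp. Qed.

Lemma card_idx_p_supp : (#|S| <= 4)%N -> (#|idx_p @: S| <= 2)%N.
Proof.
move=> S4; rewrite -(leq_pmul2l (isT : 0 < 2)%N) (leq_trans _ S4) //.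
exact: card_fibers_le_half sum_idx_p_horner S4.
Qed.

Lemma card_idx_l_supp : (#|S| <= 3)%N -> (#|idx_l @: S| <= 1)%N.
Proof.
move=> S3; rewrite -ltnS -(ltn_pmul2l (isT : 0 < 2)%N).
rewrite (leq_ltn_trans _ (S3 : #|S| < 4)%N) //.
exact: card_fibers_le_half sum_idx_l_horner S3.
Qed.

Lemma card_supp_ge4 : c != 0 -> (4 <= #|S|)%N.
Proof.
move=> c0; rewrite leqNgt; apply/negP => S3.
have /set0Pn [i iS] : S != set0 by rewrite row_supp_eq0.
have ci : c 0 i != 0 by rewrite inE in iS.
have [j [ji cj pji]] := fiber_partner sum_idx_p_horner (ltnW S3) ci.
have jS : j \in S by rewrite inE.
have lji := card_le1_eqP (card_idx_l_supp S3) _ _ (imset_f idx_l iS) (imset_f idx_l jS).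
by move/eqP: ji; apply; apply: idx_inj omega_prim pji lji.
Qed.

Lemma pairs_same_idx_p x y : (#|S| <= 4)%N ->
  x \in S -> ordS x \in S -> y \in S -> ordS y \in S -> idx_p y = idx_p x.
Proof.
move=> S4 xS x1S yS y1S; set a := idx_p x.
have img_a b : b \in idx_p @: S -> (b == a) || (b == a + 1).
  apply: card_le2_mem (card_idx_p_supp S4) (imset_f _ xS) _ _.
    by rewrite -idx_p_ordS imset_f.
  by rewrite eq_sym Fp_add1_neq.
have /img_a := imset_f idx_p y1S; have /img_a /orP [/eqP // | /eqP ya1] := imset_f idx_p yS.
by rewrite idx_p_ordS ya1 (negPf (Fp_add2_neq a)) (negPf (Fp_add1_neq _)).
Qed.

Lemma sum_two_pairs x y : (#|S| <= 4)%N -> x != y ->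
  x \in S -> ordS x \in S -> y \in S -> ordS y \in S ->
  forall f, \sum_i c 0 i * f i =
    c 0 x * f x + c 0 (ordS x) * f (ordS x) + c 0 y * f y + c 0 (ordS y) * f (ordS y).
Proof.
move=> S4 xy xS x1S yS y1S f; have pyx := pairs_same_idx_p S4 xS x1S yS y1S.
have neq_p u v : idx_p u != idx_p v -> u != v by apply: contraNneq => ->.
have x_x1 : x != ordS x by apply: neq_p; rewrite idx_p_ordS eq_sym Fp_add1_neq.
have x_y1 : x != ordS y by apply: neq_p; rewrite idx_p_ordS pyx eq_sym Fp_add1_neq.
have x1_y : ordS x != y by apply: neq_p; rewrite idx_p_ordS pyx Fp_add1_neq.
have x1_y1 : ordS x != ordS y by rewrite (inj_eq (@ordS_inj _)).
have y_y1 : y != ordS y by apply: neq_p; rewrite idx_p_ordS eq_sym Fp_add1_neq.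
have s_uniq : uniq [:: x; ordS x; y; ordS y].
  by rewrite /= !inE !negb_or xy x_x1 x_y1 x1_y x1_y1 y_y1.
rewrite (sum_supported s_uniq) => [|z zs]; first by rewrite !big_cons big_nil addr0 !addrA.
apply/eqP; rewrite mulf_eq0; apply/orP; left; apply: contraTT S4 => cz; rewrite -ltnNge.
apply/card_geqP; exists [:: z; x; ordS x; y; ordS y]; split => //; first by rewrite /= zs.
by apply/allP; rewrite /= inE cz xS x1S yS y1S.
Qed.

(* The p-fibers {x, y} and {x+1, y+1} give c_y = -c_x and c_(y+1) = -c_(x+1);
   the power sums of order 1 and 2 in the l-coordinate then force
   c_x + omega c_(x+1) = 0 = c_x + omega^2 c_(x+1). *)
Lemma no_two_pairs x y : (#|S| <= 4)%N -> x != y ->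
  x \in S -> ordS x \in S -> y \in S -> ordS y \in S -> False.
Proof.
move=> S4 xy xS x1S yS y1S; have pyx := pairs_same_idx_p S4 xS x1S yS y1S.
have sum4 := sum_two_pairs S4 xy xS x1S yS y1S.
have cyx : c 0 y = - c 0 x.
  have := sum_idx_p_horner (h := 'X - (idx_p x + 1)%:P).
  rewrite size_XsubC sum4 !hornerXsubC !idx_p_ordS pyx !subrr => /(_ isT) E.
  by apply/eqP; rewrite -addr_eq0; apply/eqP; rewrite -[RHS]oppr0 -E; ring.
have cy1x1 : c 0 (ordS y) = - c 0 (ordS x).
  have := sum_idx_p_horner (h := 'X - (idx_p x)%:P).
  rewrite size_XsubC sum4 !hornerXsubC !idx_p_ordS pyx !subrr => /(_ isT) E.
  by apply/eqP; rewrite -addr_eq0; apply/eqP; rewrite -[RHS]E; ring.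
have key k : (0 < k < 3)%N -> c 0 x + omega ^+ k * c 0 (ordS x) = 0.
  move=> /andP [k_gt0 k_lt3].
  have zeta_prim : l.-primitive_root (omega ^+ k).
    rewrite prim_root_exp_coprime //.
    by case: k k_gt0 k_lt3 => [|[|[|]]] // _ _; rewrite ?coprime1n ?coprime2n.
  have xy_l : (omega ^+ k) ^+ x - (omega ^+ k) ^+ y != 0.
    by rewrite subr_eq0; apply: contra_neq xy => /(idx_inj zeta_prim (esym pyx)) ->.
  have := sum_idx_l_exp k_lt3; rewrite sum4 !idx_l_ordS cyx cy1x1 /idx_l !exprMn.
  rewrite -!(exprAC omega k) => E; apply/eqP; move: xy_l; apply: contraNT => Nkey.
  apply/eqP; apply: (mulIf Nkey); rewrite mul0r -[RHS]E; ring.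
have [_ _ om2om] := omega_neq.
have : (omega - omega ^+ 2) * c 0 (ordS x) =
    (c 0 x + omega ^+ 1 * c 0 (ordS x)) - (c 0 x + omega ^+ 2 * c 0 (ordS x)) by ring.
rewrite !key // subrr => /eqP; rewrite mulf_eq0 subr_eq0 eq_sym (negPf om2om).
by move: x1S; rewrite inE => /negPf ->.
Qed.

Lemma pair_weight_ge7 : c != 0 -> (7 <= #|pair_support S|)%N.
Proof.
move=> c0; rewrite leqNgt; apply/negP => small.
have S_neq0 : S != set0 by rewrite row_supp_eq0.
have n_ge7 : (7 <= n)%N by apply: leq_trans n_ge15.
have [S3 | [S4 A2] | [s Sw]] := small_pair_support n_ge7 S_neq0 small.
- by have := card_supp_ge4 c0; rewrite leqNgt ltnS S3.
- have [x [y [/setIP [xS x1S] /setIP [yS y1S] xy]]] := card_gt1P A2.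
  rewrite inE in x1S; rewrite inE in y1S.
  by apply: (no_two_pairs _ xy xS x1S yS y1S); rewrite S4.
- move/eqP: c0; apply; apply: (cyclic_code_window_eq0 n_gt0 g_dvd_Xn_sub1 _ cC Sw).
  by rewrite size_g.
Qed.

End Codeword.

Lemma AMDS_pair_code_C : AMDS_pair_code C 7.
Proof.
have g_dvd := g_dvd_Xn_sub1.
split; last exact: card_C.
split.
  exists witness, 0; split.
  - exact: witness_in_C.
  - exact: cyclic_code0 n_gt0 g_dvd.
  - exact: witness_neq0.
  - exact: pair_dist_witness.
move=> x y xC yC xy; rewrite pair_dist_supp.
by apply: pair_weight_ge7; rewrite ?subr_eq0 ?(cyclic_codeB n_gt0 g_dvd).
Qed.

End Theorem3p11.

Theorem theorem3p11 (p l : nat) (omega : 'F_p) :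
  prime p -> odd p -> odd l -> (3 <= l)%N -> (l %| p.-1)%N ->
  l.-primitive_root omega ->
  AMDS_pair_code
    (@cyclic_code _ (l * p)
       (('X - 1) ^+ 4 * ('X - omega%:P) * ('X - (omega ^+ 2)%:P)))
    7.
Proof. exact: AMDS_pair_code_C. Qed.
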